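(* Let $I\subset\mathbb R$ be a (not necessarily bounded) closed connected set with $0\in I$, equipped with the usual metric and base point $0$. Let $f\in\mathrm{Lip}_0(I,I)$ be such that $\mathrm{int}(R_{\widehat f})\neq\emptyset$. Then $f\circ f$ is the identity on $I$. In particular $R_{\widehat f}=\mathcal F(I)$.
   Context: $\mathrm{Lip}_0(I,I)$ denotes the Lipschitz maps $f:I\to I$ with $f(0)=0$; $\mathrm{Lip}_0(I)$ the real-valued Lipschitz functions vanishing at $0$ normed by the Lipschitz constant. $\delta:I\to\mathrm{Lip}_0(I)^*$, $\delta(x)(\varphi)=\varphi(x)$; the Lipschitz-free space $\mathcal F(I)$ is the norm-closed linear span of $\delta(I)$. $\widehat f$ is the unique bounded linear operator on $\mathcal F(I)$ with $\widehat f(\delta(x))=\delta(f(x))$. For an operator $T$, $R_T=\{\mu:\liminf_{n}\|T^n\mu-\mu\|=0\}$. *)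

From HB Require Import structures.
From mathcomp Require Import all_boot all_order all_algebra.
From mathcomp Require Import all_classical all_reals all_analysis.
Set Implicit Arguments. Unset Strict Implicit. Unset Printing Implicit Defensive.
Import Order.TTheory GRing.Theory Num.Theory.
Import numFieldNormedType.Exports.
Local Open Scope classical_set_scope.
Local Open Scope ring_scope.

Definition lip_on {R : realType} (I : set R) (g : R -> R) (L : R) : Prop :=
  0 <= L /\ forall x y, I x -> I y -> `|g x - g y| <= L * `|x - y|.

(* phi represents an element of Lip_0(I) with Lipschitz constant <= L
   (only the restriction of phi to I matters). *)
Definition Lip0 {R : realType} (I : set R) (phi : R -> R) (L : R) : Prop :=
  phi 0 = 0 /\ lip_on I phi L.

Definition Lip0_self {R : realType} (I : set R) (f : R -> R) : Prop :=
  (forall x, I x -> I (f x)) /\ f 0 = 0 /\ exists L, lip_on I f L.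

(* Functionals on Lip_0(I) (elements of the dual are represented by their
   action on test functions). *)
Definition functional (R : realType) := (R -> R) -> R.

Definition delta {R : realType} (x : R) : functional R := fun phi => phi x.

Definition fsub {R : realType} (mu nu : functional R) : functional R :=
  fun phi => mu phi - nu phi.

(* ||mu||_{Lip_0(I)^*} <= s, i.e. |mu phi| <= s * Lip(phi) for all phi in Lip_0(I). *)
Definition fnorm_le {R : realType} (I : set R) (mu : functional R) (s : R) : Prop :=
  forall phi L, Lip0 I phi L -> `|mu phi| <= s * L.

Definition fnorm_lt {R : realType} (I : set R) (mu : functional R) (e : R) : Prop :=
  exists s, s < e /\ fnorm_le I mu s.

Definition molecule {R : realType} (l : seq (R * R)) : functional R :=
  fun phi => \sum_(p <- l) p.1 * phi p.2.

Definition in_span_delta {R : realType} (I : set R) (mu : functional R) : Prop :=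
  exists l : seq (R * R), (forall p, p \in l -> I p.2) /\ mu = molecule l.

Definition free_space {R : realType} (I : set R) : set (functional R) :=
  [set mu | forall e, 0 < e ->
     exists nu, in_span_delta I nu /\ fnorm_le I (fsub mu nu) e].

(* \hat f : delta(x) |-> delta(f x), extended linearly/continuously:
   (\hat f mu)(phi) = mu (phi o f). *)
Definition fhat {R : realType} (f : R -> R) (mu : functional R) : functional R :=
  fun phi => mu (phi \o f).

Definition recurrent {R : realType} (I : set R) (T : functional R -> functional R)
  (mu : functional R) : Prop :=
  forall (e : R) (N : nat), 0 < e ->
    exists n, (N <= n)%N /\ fnorm_lt I (fsub (iter n T mu) mu) e.

Definition R_set {R : realType} (I : set R) (T : functional R -> functional R)
  : set (functional R) :=
  [set mu | free_space I mu /\ recurrent I T mu].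

Definition nonempty_interior {R : realType} (I : set R) (S : set (functional R)) : Prop :=
  exists mu0, free_space I mu0 /\ exists r, 0 < r /\
    forall mu, free_space I mu -> fnorm_lt I (fsub mu mu0) r -> S mu.

(* Suppose the recurrent vectors of \hat f contain a ball of radius r around
   mu0, and let nu be a molecule within r/4 of mu0.  For points a, b of I with
   |a - b| small, nu + c (delta a - delta b) with c |a - b| = r/2 lies in the
   ball, hence is recurrent; testing it against a tent function centred at a
   (or b), whose effect on nu is small compared to c, shows that a and b come
   back close to themselves simultaneously.  Hence every point of I is
   recurrent and f is locally injective, so f, continuous on an interval, is
   strictly monotone.  An increasing map fixes its recurrent points; a
   decreasing one sends x to the other side of 0 at odd times, so x returns
   at even times and is fixed by f o f.  Finally, when f o f is the identity
   on I, \hat f ^ 2 fixes every vector of F(I). *)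

From mathcomp Require Import all_boot all_order all_algebra.
From mathcomp Require Import all_classical all_reals all_analysis.
From mathcomp Require Import ring lra.
Set Implicit Arguments. Unset Strict Implicit. Unset Printing Implicit Defensive.
Import Order.TTheory GRing.Theory Num.Theory Num.Def.
Import numFieldNormedType.Exports.
Local Open Scope classical_set_scope.
Local Open Scope ring_scope.

Section RealDynamics.
Variable R : realType.
Implicit Types (I : set R) (f g : R -> R).

Lemma lip_on_continuous I f L : lip_on I f L -> {within I, continuous f}.
Proof.
move=> [L0 fL]; apply/subspace_continuousP => x Ix.
apply/cvgrPdist_lt => e e0.
have L1 : 0 < L + 1 by rewrite ltr_wpDl.
rewrite near_withinE; near=> t => It.
have xt : `|x - t| < e / (L + 1).
  near: t; apply/nbhs_ballP; exists (e / (L + 1)); first exact: divr_gt0.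
  by move=> u /=; rewrite -ball_normE.
apply: (le_lt_trans (fL x t Ix It)); apply: (le_lt_trans (y := (L + 1) * `|x - t|)).
  by rewrite ler_wpM2r // lerDl.
by rewrite -ltr_pdivlMl // mulrC.
Unshelve. all: by end_near.
Qed.

(* Around an interior maximum c, the IVT on both sides of c yields the level pair. *)
Lemma level_pair_near_max g a b d :
  a < b -> 0 < d -> {within `[a, b], continuous g} -> g a = g b ->
  (exists2 c, c \in `[a, b] & g a < g c) ->
  exists p q, [/\ a <= p, p < q, q <= b, q - p <= d + d & g p = g q].
Proof.
move=> ab d0 gc gab [c0 c0ab gc0].
have [c cab cmax] := EVT_max (ltW ab) gc.
have gac : g a < g c by apply: (lt_le_trans gc0); apply: cmax.
have ac : a < c.
  move: cab; rewrite in_itv /= => /andP[+ _]; rewrite le_eqVlt => /predU1P[E|//].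
  by move: gac; rewrite E ltxx.
have cb : c < b.
  move: cab; rewrite in_itv /= => /andP[_ +]; rewrite le_eqVlt => /predU1P[E|//].
  by move: gac; rewrite E gab ltxx.
set u := maxr a (c - d); set v := minr b (c + d).
have uc : u < c by rewrite gt_max ac /= ltrBlDr ltrDl.
have cv : c < v by rewrite lt_min cb /= ltrDl.
have au : a <= u by rewrite le_max lexx.
have vb : v <= b by rewrite ge_min lexx.
have ud : c - d <= u by rewrite le_max lexx orbT.
have vd : v <= c + d by rewrite ge_min lexx orbT.
have sub_ab t : u <= t <= v -> t \in `[a, b].
  by move=> /andP[ut tv]; rewrite in_itv /= (le_trans au ut) (le_trans tv vb).
have gu : g u <= g c by apply/cmax/sub_ab; rewrite lexx ltW // (lt_trans uc cv).
have gv : g v <= g c by apply/cmax/sub_ab; rewrite lexx ltW // (lt_trans uc cv).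
have gc_uc : {within `[u, c], continuous g}.
  apply: (continuous_subspaceW _ gc) => t /=; rewrite in_itv /= => /andP[ut tc].
  by apply: sub_ab; rewrite ut /= (le_trans tc) // ltW.
have gc_cv : {within `[c, v], continuous g}.
  apply: (continuous_subspaceW _ gc) => t /=; rewrite in_itv /= => /andP[ct tv].
  by apply: sub_ab; rewrite tv andbT (le_trans _ ct) // ltW.
have [guv|gvu] := leP (g u) (g v).
- have [p] : exists2 p, p \in `[u, c] & g p = g v.
    by apply: IVT => //; [exact: ltW | rewrite ge_min guv le_max gv orbT].
  rewrite in_itv /= => /andP[up pc] gp.
  exists p, v; split => //; first exact: le_trans au up.
    exact: le_lt_trans pc cv.
  by have := le_trans ud up; lra.
- have [q] : exists2 q, q \in `[c, v] & g q = g u.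
    by apply: IVT => //; [exact: ltW | rewrite ge_min (ltW gvu) orbT le_max gu].
  rewrite in_itv /= => /andP[cq qv] gq.
  exists u, q; split => //; first exact: lt_le_trans uc cq.
    exact: le_trans qv vb.
  by have := le_trans qv vd; lra.
Qed.

Lemma level_pair_close g a b d :
  a < b -> 0 < d -> {within `[a, b], continuous g} -> g a = g b ->
  exists p q, [/\ a <= p, p < q, q <= b, q - p <= d & g p = g q].
Proof.
move=> ab d0 gc gab; rewrite [d]splitr; have d2 : 0 < d / 2 by rewrite divr_gt0.
have [up|] := pselect (exists2 c, c \in `[a, b] & g a < g c).
  exact: level_pair_near_max.
have [down|] := pselect (exists2 c, c \in `[a, b] & - g a < - g c).
  have gcN : {within `[a, b], continuous (- g)} by move=> x; apply/continuousN/gc.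
  have [p [q [ap pq qb qp /oppr_inj E]]] :=
    level_pair_near_max ab d2 gcN (congr1 -%R gab) down.
  by exists p, q.
move=> not_down not_up.
have g_cst t : t \in `[a, b] -> g t = g a.
  move=> tab; apply/eqP; rewrite eq_le !leNgt; apply/andP.
  by split; apply/negP => lt; [apply: not_up | apply: not_down]; exists t; rewrite ?ltrN2.
set q := minr b (a + d / 2).
have aq : a < q by rewrite lt_min ab ltrDl.
have qab : q \in `[a, b] by rewrite in_itv /= ge_min lexx ltW.
exists a, q; split => //; rewrite ?ge_min ?lexx ?g_cst //.
have : q <= a + d / 2 by rewrite ge_min lexx orbT.
lra.
Qed.

Lemma locally_injective_injective I g h :
  is_interval I -> {within I, continuous g} -> 0 < h ->
  (forall a b, I a -> I b -> a < b -> b - a <= h -> g a != g b) ->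
  forall a b, I a -> I b -> g a = g b -> a = b.
Proof.
move=> iI gc h0 loc_inj.
suff no_level a b : I a -> I b -> a < b -> g a = g b -> False.
  move=> a b Ia Ib gab; case: (ltgtP a b) => // ab.
    by case: (no_level a b).
  by case: (no_level b a).
move=> Ia Ib ab gab.
have sub_I : [set` `[a, b]] `<=` I.
  by move=> t /=; rewrite in_itv /= => /andP[ta tb]; apply: (iI a b); rewrite ?ta ?tb.
have [p [q [ap pq qb qp gpq]]] :=
  level_pair_close ab h0 (continuous_subspaceW sub_I gc) gab.
have Ip : I p by apply: sub_I; rewrite /= in_itv /= ap ltW // (lt_le_trans pq).
have Iq : I q by apply: sub_I; rewrite /= in_itv /= qb ltW // (le_lt_trans ap).
by move: (loc_inj p q Ip Iq pq qp); rewrite gpq eqxx.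
Qed.
End RealDynamics.

Section Recurrence.
Variable R : realType.
Implicit Types (I : set R) (f g : R -> R).

Definition recurrent_pt f x :=
  forall e N, 0 < e -> exists2 n, (N <= n)%N & `|iter n f x - x| < e.

Definition pair_recurrent I f h :=
  forall a b e N, I a -> I b -> 0 < e <= `|a - b| -> `|a - b| <= h ->
  exists2 n, (N <= n)%N & `|iter n f a - a| < e /\ `|iter n f b - b| < e.

Lemma iter_stable I g x n : (forall y, I y -> I (g y)) -> I x -> I (iter n g x).
Proof. by move=> gI Ix; elim: n => //= n IH; apply: gI. Qed.

Lemma nondecreasing_iter_dist I g x n :
  (forall y, I y -> I (g y)) -> (forall y z, I y -> I z -> y <= z -> g y <= g z) ->
  I x -> (0 < n)%N -> `|g x - x| <= `|iter n g x - x|.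
Proof.
move=> gI gm Ix; case: n => // n _ /=.
have gxn : forall m, I (iter m g x) by move=> m; exact: iter_stable.
have [xg|gx] := lerP x (g x).
- have xn m : x <= iter m g x.
    by elim: m => //= m IH; apply: le_trans xg _; apply: gm.
  have gn : g x <= g (iter n g x) by apply: gm.
  by rewrite !ger0_norm ?subr_ge0 ?(le_trans xg) // lerB.
- have xn m : iter m g x <= x.
    by elim: m => //= m IH; apply: le_trans (ltW gx); apply: gm.
  have gn : g (iter n g x) <= g x by apply: gm.
  by rewrite !ler0_norm ?subr_le0 ?(ltW gx) ?(le_trans gn (ltW gx)) //; lra.
Qed.

Lemma nondecreasing_recurrent_fixed I g x :
  (forall y, I y -> I (g y)) -> (forall y z, I y -> I z -> y <= z -> g y <= g z) ->
  I x -> recurrent_pt g x -> g x = x.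
Proof.
move=> gI gm Ix xrec; have [//|gx] := eqVneq (g x) x.
have gx0 : 0 < `|g x - x| by rewrite normr_gt0 subr_eq0.
have [n n1 close] := xrec _ 1%N gx0.
by move: (nondecreasing_iter_dist gI gm Ix n1); rewrite leNgt close.
Qed.

Lemma is_interval_scale I x c : is_interval I -> I 0 -> I x -> 0 <= c <= 1 -> I (x * c).
Proof.
move=> iI I0 Ix /andP[c0 c1]; have [x0|x0] := leP 0 x.
- by apply: (iI 0 x) => //; rewrite mulr_ge0 //= ler_piMr.
- apply: (iI x 0) => //; rewrite nmulr_rle0 // c0 andbT.
  by rewrite -[X in X <= _]mulr1 ler_wnM2l // ltW.
Qed.

Lemma pair_recurrent_recurrent_pt I f h x :
  is_interval I -> I 0 -> 0 < h -> pair_recurrent I f h -> I x -> x != 0 ->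
  recurrent_pt f x.
Proof.
move=> iI I0 h0 fpr Ix x0 e N e0.
have nx0 : 0 < `|x| by rewrite normr_gt0.
set d := minr `|x| h.
have d0 : 0 < d by rewrite lt_min nx0.
set b := x * (1 - d / `|x|).
have Ib : I b.
  apply: is_interval_scale => //.
  by rewrite subr_ge0 ler_pdivrMr // mul1r ge_min lexx /= lerBlDr lerDl divr_ge0 // ltW.
have xb : `|x - b| = d.
  rewrite /b mulrBr mulr1 opprB addrCA subrr addr0 normrM.
  by rewrite [`|d / _|]ger0_norm ?divr_ge0 ?ltW // mulrCA mulfV ?mulr1 // gt_eqF.
have ed : 0 < minr e d <= `|x - b| by rewrite xb lt_min e0 d0 ge_min lexx orbT.
have [|n Nn [close _]] := fpr x b _ N Ix Ib ed; first by rewrite xb ge_min lexx orbT.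
by exists n => //; apply: lt_le_trans close _; rewrite ge_min lexx.
Qed.

Lemma pair_recurrent_locally_injective I f h a b :
  pair_recurrent I f h -> I a -> I b -> a < b -> b - a <= h -> f a != f b.
Proof.
move=> fpr Ia Ib ab abh; apply/eqP => fab.
have dab : `|a - b| = b - a by rewrite distrC gtr0_norm // subr_gt0.
have e0 : 0 < (b - a) / 2 <= `|a - b| by rewrite dab; apply/andP; split; lra.
have dabh : `|a - b| <= h by rewrite dab.
have [[|n] // _] := fpr a b _ 1%N Ia Ib e0 dabh.
rewrite !iterSr fab => -[ca cb].
by have := ler_distD (iter n f (f b)) a b; rewrite dab (distrC a); lra.
Qed.

Lemma strictly_monotone_cases I f :
  is_interval I -> {within I, continuous f} ->
  (forall y z, I y -> I z -> f y = f z -> y = z) ->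
  (forall y z, I y -> I z -> y < z -> f y < f z) \/
  (forall y z, I y -> I z -> y < z -> f z < f y).
Proof.
move=> /is_intervalP eI fc finj; rewrite eI in fc finj *.
have [incr|decr] := itv_continuous_inj_mono fc finj; [left|right] => y z Iy Iz yz.
- exact: incr.
- exact: decr.
Qed.

Lemma decreasing_sgr I f y :
  I 0 -> f 0 = 0 -> (forall y z, I y -> I z -> y < z -> f z < f y) -> I y ->
  Num.sg (f y) = - Num.sg y.
Proof.
move=> I0 f0 fd Iy; case: (ltrgt0P y) => [yp|yn|->]; last by rewrite f0 sgr0 oppr0.
- by rewrite (gtr0_sg yp) ltr0_sg // -f0 fd.
- by rewrite (ltr0_sg yn) opprK gtr0_sg // -f0 fd.
Qed.

Lemma decreasing_sgr_iter I f x n :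
  I 0 -> f 0 = 0 -> (forall y, I y -> I (f y)) ->
  (forall y z, I y -> I z -> y < z -> f z < f y) -> I x ->
  Num.sg (iter n f x) = (-1) ^+ n * Num.sg x.
Proof.
move=> I0 f0 fI fd Ix; elim: n => [|n IH] /=; first by rewrite mul1r.
by rewrite (decreasing_sgr I0 f0 fd (iter_stable n fI Ix)) IH exprS mulN1r mulNr.
Qed.

Lemma norm_le_dist_opp_sgr (x y : R) : Num.sg y = - Num.sg x -> `|x| <= `|y - x|.
Proof.
case: (ltrgt0P x) => [xp|xn|->] sgy; last exact: normr_ge0.
- move: sgy; rewrite (gtr0_sg xp) => /eqP; rewrite sgr_cp0 => yn.
  by rewrite ltr0_norm; lra.
- move: sgy; rewrite (ltr0_sg xn) opprK => /eqP; rewrite sgr_cp0 => yp.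
  by rewrite gtr0_norm; lra.
Qed.

(* Odd iterates of a decreasing map lie on the other side of 0, so a return
   of [x] closer than [|x|] happens at an even time. *)
Lemma decreasing_recurrent_pt_iter2 I f x :
  I 0 -> f 0 = 0 -> (forall y, I y -> I (f y)) ->
  (forall y z, I y -> I z -> y < z -> f z < f y) -> I x -> x != 0 ->
  recurrent_pt f x -> recurrent_pt (fun y => f (f y)) x.
Proof.
move=> I0 f0 fI fd Ix x0 xrec e N e0.
have ex0 : 0 < minr e `|x| by rewrite lt_min e0 normr_gt0.
have [n Nn] := xrec _ N.*2 ex0; rewrite lt_min => /andP[close near_x].
have n_even : ~~ odd n.
  apply/negP => n_odd; move: near_x; rewrite ltNge norm_le_dist_opp_sgr //.
  by rewrite (decreasing_sgr_iter _ I0 f0 fI fd Ix) -signr_odd n_odd expr1 mulN1r.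
have n_half : n = (n./2).*2 by rewrite -[LHS]odd_double_half (negbTE n_even).
exists n./2; first by rewrite -leq_double -n_half.
suff -> : iter n./2 (fun y => f (f y)) x = iter n f x by [].
by rewrite [in RHS]n_half -muln2 iterM.
Qed.

Lemma pair_recurrent_involutive I f L h :
  is_interval I -> I 0 -> (forall x, I x -> I (f x)) -> f 0 = 0 -> lip_on I f L ->
  0 < h -> pair_recurrent I f h -> forall x, I x -> f (f x) = x.
Proof.
move=> iI I0 fI f0 fL h0 fpr.
have fc := lip_on_continuous fL.
have finj := locally_injective_injective iI fc h0
  (fun a b => pair_recurrent_locally_injective fpr).
move=> x Ix; have [->|x0] := eqVneq x 0; first by rewrite !f0.
have xrec := pair_recurrent_recurrent_pt iI I0 h0 fpr Ix x0.
have [fi|fd] := strictly_monotone_cases iI fc finj.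
- have fm y z : I y -> I z -> y <= z -> f y <= f z.
    by move=> Iy Iz; rewrite le_eqVlt => /predU1P[->//|yz]; apply/ltW/fi.
  by rewrite !(nondecreasing_recurrent_fixed fI fm Ix xrec).
- have ffI y : I y -> I (f (f y)) by move=> Iy; apply/fI/fI.
  have ffm y z : I y -> I z -> y <= z -> f (f y) <= f (f z).
    move=> Iy Iz; rewrite le_eqVlt => /predU1P[->//|yz].
    by apply/ltW/fd; [apply: fI | apply: fI | apply: fd].
  exact: nondecreasing_recurrent_fixed ffI ffm Ix
    (decreasing_recurrent_pt_iter2 I0 f0 fI fd Ix x0 xrec).
Qed.
End Recurrence.

Section FreeSpace.
Variable R : realType.
Implicit Types (I : set R) (f : R -> R) (mu : functional R) (l : seq (R * R)).

Lemma iter_fhat f mu n : iter n (fhat f) mu = fun phi => mu (phi \o iter n f).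
Proof. by elim: n => [|n IH] /=; apply: funext => phi //; rewrite IH. Qed.

Lemma in_span_free_space I mu : in_span_delta I mu -> free_space I mu.
Proof.
move=> mu_span e e0; exists mu; split => // phi L [_ [L0 _]].
by rewrite /fsub subrr normr0 mulr_ge0 // ltW.
Qed.

Lemma free_space_eq_on I mu phi psi L :
  free_space I mu -> Lip0 I phi L -> Lip0 I psi L ->
  (forall t, I t -> phi t = psi t) -> mu phi = mu psi.
Proof.
move=> Fmu phiL psiL eq_on; apply/eqP; rewrite -subr_eq0 -normr_le0.
apply/ler_addgt0Pr => z z0; rewrite add0r.
have L0 : 0 <= L by case: phiL => _ [].
have e0 : 0 < z / (2 * (L + 1)) by rewrite divr_gt0 // mulr_gt0 //; lra.
have [nu [[l [lI ->]] approx]] := Fmu _ e0.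
have nu_eq : molecule l phi = molecule l psi.
  by apply: eq_big_seq => p /lI Ip; rewrite eq_on.
have eL : z / (2 * (L + 1)) * L <= z / 2.
  have -> : z / 2 = z / (2 * (L + 1)) * (L + 1) by field; lra.
  by apply: ler_wpM2l; [exact: ltW | lra].
have := approx phi L phiL; have := approx psi L psiL; rewrite /fsub nu_eq.
move: (mu phi) (mu psi) (molecule l psi) => x y m hy hx.
have : `|x - y| <= `|x - m| + `|m - y| by apply: ler_distD.
by rewrite (distrC m); lra.
Qed.

Definition dipole l c a b : functional R :=
  fun phi => molecule l phi + c * (phi a - phi b).

Lemma dipoleN l c a b : dipole l c a b = dipole l (- c) b a.
Proof. by apply: funext => phi; rewrite /dipole; ring. Qed.

Lemma dipole_in_span I l c a b :
  (forall p, p \in l -> I p.2) -> I a -> I b -> in_span_delta I (dipole l c a b).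
Proof.
move=> lI Ia Ib; exists (l ++ [:: (c, a); (- c, b)]); split.
  by move=> p; rewrite mem_cat !inE => /or3P[/lI|/eqP->|/eqP->].
apply: funext => phi; rewrite /dipole /molecule big_cat /= !big_cons big_nil /=.
by ring.
Qed.

Lemma fnorm_le_dipole I mu0 l c a b s :
  fnorm_le I (fsub mu0 (molecule l)) s -> I a -> I b ->
  fnorm_le I (fsub (dipole l c a b) mu0) (s + `|c| * `|a - b|).
Proof.
move=> approx Ia Ib phi L phiL; have := approx phi L phiL.
case: phiL => _ [_ /(_ a b Ia Ib) phi_ab]; rewrite /fsub /dipole mulrDl => h.
have -> : molecule l phi + c * (phi a - phi b) - mu0 phi =
  - (mu0 phi - molecule l phi) + c * (phi a - phi b) by ring.
apply: (le_trans (ler_normD _ _)); rewrite normrN normrM; apply: lerD => //.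
by rewrite -mulrA [_ * L]mulrC ler_wpM2l.
Qed.

Definition tent (z rho t : R) := maxr 0 (rho - `|t - z|).

Lemma tent_ge0 z rho t : 0 <= tent z rho t.
Proof. by rewrite /tent le_max lexx. Qed.

Lemma tent_le z rho t : 0 <= rho -> tent z rho t <= rho.
Proof. by move=> rho0; rewrite /tent ge_max rho0 lerBlDr lerDl normr_ge0. Qed.

Lemma tent_center z rho : 0 <= rho -> tent z rho z = rho.
Proof. by move=> rho0; rewrite /tent subrr normr0 subr0 max_r. Qed.

Lemma tent_far z rho t : rho <= `|t - z| -> tent z rho t = 0.
Proof. by move=> far; rewrite /tent max_l // subr_le0. Qed.

Lemma dist_maxr0_le (u v : R) : `|maxr 0 u - maxr 0 v| <= `|u - v|.
Proof.
have [u0|u0] := leP 0 u; have [v0|v0] := leP 0 v.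
- by [].
- by rewrite subr0 (ger0_norm u0) ger0_norm; lra.
- by rewrite sub0r normrN (ger0_norm v0) ler0_norm; lra.
- by rewrite subrr normr0.
Qed.

Lemma tent_lip z rho x y : `|tent z rho x - tent z rho y| <= `|x - y|.
Proof.
apply: (le_trans (dist_maxr0_le _ _)).
have -> : (rho - `|x - z|) - (rho - `|y - z|) = `|y - z| - `|x - z| by ring.
apply: (le_trans (ler_dist_dist _ _)).
by rewrite -normrN; have -> : - ((y - z) - (x - z)) = x - y by ring.
Qed.

Lemma Lip0_tent I z rho : Lip0 I (fun t => tent z rho t - tent z rho 0) 1.
Proof.
split; first by rewrite subrr.
by split => // x y _ _; rewrite mul1r opprB addrA subrK tent_lip.
Qed.

Lemma molecule_comp_dist_le l (phi g : R -> R) M :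
  (forall t u, `|phi t - phi u| <= M) ->
  `|molecule l (phi \o g) - molecule l phi| <= M * \sum_(p <- l) `|p.1|.
Proof.
move=> phiM; rewrite /molecule -sumrB big_distrr /=.
apply: (le_trans (ler_norm_sum _ _ _)); apply: ler_sum => p _.
by rewrite -mulrBr normrM mulrC ler_wpM2r.
Qed.

(* Test the return estimate against the tent of height [rho] at [z]: the
   dipole term then moves by at least [rho |c|], the molecule by at most
   [rho] times its total mass. *)
Lemma dipole_iter_return I f l c z w rho s n :
  0 < rho -> rho <= `|z - w| ->
  fnorm_le I (fsub (iter n (fhat f) (dipole l c z w)) (dipole l c z w)) s ->
  s < rho * (`|c| - \sum_(p <- l) `|p.1|) -> `|iter n f z - z| < rho.
Proof.
move=> rho0 far_w return_s s_lt; rewrite ltNge; apply/negP => far_z.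
set psi := fun t => tent z rho t - tent z rho 0.
have psi_dist t u : psi t - psi u = tent z rho t - tent z rho u.
  by rewrite /psi opprB addrA subrK.
have mol : `|molecule l (psi \o iter n f) - molecule l psi| <=
    rho * \sum_(p <- l) `|p.1|.
  apply: molecule_comp_dist_le => t u; rewrite psi_dist ler_norml.
  have := tent_ge0 z rho t; have := tent_ge0 z rho u.
  have := tent_le z t (ltW rho0); have := tent_le z u (ltW rho0); lra.
have dip : rho * `|c| <= `|c * (psi (iter n f z) - psi (iter n f w)) -
                           c * (psi z - psi w)|.
  rewrite -mulrBr normrM mulrC ler_wpM2l // !psi_dist (tent_far far_z).
  rewrite tent_center ?(ltW rho0) // [tent z rho w]tent_far ?(distrC w) //.
  by rewrite ler_normr; have := tent_ge0 z rho (iter n f w); lra.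
have := return_s psi 1 (Lip0_tent I z rho); rewrite mulr1 /fsub iter_fhat /dipole /=.
move: mol dip; set m1 := molecule l _; set m2 := molecule l psi.
set y1 := c * _; set y2 := c * (psi z - psi w) => mol dip ret.
have : `|y1 - y2| <= `|m1 + y1 - (m2 + y2)| + `|m2 - m1|.
  have -> : y1 - y2 = m1 + y1 - (m2 + y2) + (m2 - m1) by ring.
  exact: ler_normD.
by move: s_lt mol; rewrite mulrBr distrC; lra.
Qed.

Lemma interior_pair_recurrent I f :
  nonempty_interior I (R_set I (fhat f)) -> exists2 h, 0 < h & pair_recurrent I f h.
Proof.
move=> [mu0 [Fmu0 [r [r0 ball_rec]]]].
have r4 : 0 < r / 4 by rewrite divr_gt0.
have [_ [[l [lI ->]] approx]] := Fmu0 _ r4.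
set A := \sum_(p <- l) `|p.1|.
have A0 : 0 <= A by apply: sumr_ge0.
exists (r / (2 * (A + 1))); first by rewrite divr_gt0 // mulr_gt0 //; lra.
move=> a b e N Ia Ib /andP[e0 e_ab] ab_h.
have ab0 : 0 < `|a - b| := lt_le_trans e0 e_ab.
set c := r / (2 * `|a - b|).
have c_ab : c * `|a - b| = r / 2 by rewrite /c; field; rewrite gt_eqF.
have cA : A + 1 <= c.
  rewrite /c ler_pdivlMr ?mulr_gt0 //.
  by move: ab_h; rewrite ler_pdivlMr ?mulr_gt0 //; lra.
have [_ mu_rec] : R_set I (fhat f) (dipole l c a b).
  apply: ball_rec; first exact/in_span_free_space/dipole_in_span.
  exists (r / 4 + `|c| * `|a - b|); split; last exact: fnorm_le_dipole.
  by rewrite ger0_norm ?c_ab; lra.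
have ecA : 0 < e * (c - A) by rewrite mulr_gt0 //; lra.
have [n [Nn [s [s_lt return_s]]]] := mu_rec _ N ecA.
exists n => //; split.
- by apply: dipole_iter_return return_s _ => //; rewrite ger0_norm //; lra.
- rewrite dipoleN in return_s; apply: dipole_iter_return return_s _ => //.
    by rewrite distrC.
  by rewrite normrN ger0_norm //; lra.
Qed.

Lemma involutive_recurrent I f mu :
  I 0 -> (forall x, I x -> f (f x) = x) -> free_space I mu -> recurrent I (fhat f) mu.
Proof.
move=> I0 ff Fmu e N e0; exists N.*2; split; first by rewrite -addnn leq_addr.
exists 0; split => // phi L phiL; rewrite mul0r iter_fhat /fsub /=.
have ret t : I t -> iter N.*2 f t = t.
  by move=> It; rewrite -muln2 iterM; elim: N => //= k ->; apply: ff.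
have phi_ret : Lip0 I (phi \o iter N.*2 f) L.
  case: phiL => phi0 [L0 phiL]; split; first by rewrite /= ret.
  by split => // x y Ix Iy /=; rewrite !ret //; apply: phiL.
by rewrite (free_space_eq_on Fmu phi_ret phiL) ?subrr ?normr0 // => t /ret /= ->.
Qed.
End FreeSpace.

Theorem theorem3p21 (R : realType) (I : set R) (f : R -> R) :
  closed I -> connected I -> I 0 ->
  Lip0_self I f ->
  nonempty_interior I (R_set I (fhat f)) ->
  (forall x, I x -> f (f x) = x) /\ R_set I (fhat f) = free_space I.
Proof.
move=> _ /connected_intervalP iI I0 [fI [f0 [L fL]]] int_rec.
have [h h0 fpr] := interior_pair_recurrent int_rec.
have ff := pair_recurrent_involutive iI I0 fI f0 fL h0 fpr.
split => //; apply/seteqP; split => [mu [] //|mu Fmu].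
by split => //; exact: involutive_recurrent.
Qed.
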